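(* Let $\mathbb O=\{-1,0,1\}$ and $\theta=0$. If $x(0)\in\mathbb O^n$ has no coordinate equal to $0$, then there exists a finite legal update sequence from $x(0)$ leading the system either to a consensus state $(z,\dots,z)$ with $z\neq0$ or to a non-consensus equilibrium.
   Context: Let $n\ge1$, $\mathcal V=\{1,\dots,n\}$, and let $W=(w_{ij})$ be an $n\times n$ row-stochastic matrix. For $x\in\mathbb O^n$, $i\in\mathcal V$, $z\in\mathbb O$, define $C^i_{\mathrm{social}}(z;x)=\sum_{j=1}^n w_{ij}|z-x_j|$ and $P_i(x)=\{z\in\mathbb O: C^i_{\mathrm{social}}(z;x)\le C^i_{\mathrm{social}}(x_i;x),\ |z-\theta|\le |x_i-\theta|\}$. A legal update sequence from $x(0)$ is a finite sequence $(i_1,z_1),\dots,(i_T,z_T)$ with $i_t\in\mathcal V$, generating $x(1),\dots,x(T)$ where $x(t)$ is obtained from $x(t-1)$ by setting coordinate $i_t$ to $z_t$, such that $z_t\in P_{i_t}(x(t-1))$ for every $t$. An equilibrium is a state $x^*$ with $P_i(x^* )=\{x_i^*\}$ for all $i\in\mathcal V$; it is non-consensus if not all coordinates are equal. *)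

From HB Require Import structures.
From mathcomp Require Import all_boot all_order all_algebra.
Set Implicit Arguments. Unset Strict Implicit. Unset Printing Implicit Defensive.
Import Order.TTheory GRing.Theory Num.Theory.
Local Open Scope ring_scope.

Definition inO (z : int) : bool := z \in [:: -1; 0; 1].

Definition theta : int := 0.

Definition state (n : nat) := 'I_n -> int.

Definition in_On (n : nat) (x : state n) : Prop := forall i, inO (x i).

Definition row_stochastic (R : realFieldType) (n : nat) (W : 'M[R]_n) : Prop :=
  (forall i j, 0 <= W i j) /\ (forall i, \sum_j W i j = 1).

Definition C_social (R : realFieldType) (n : nat) (W : 'M[R]_n)
  (i : 'I_n) (z : int) (x : state n) : R :=
  \sum_j W i j * (`|z - x j|%:~R).

Definition P_i (R : realFieldType) (n : nat) (W : 'M[R]_n)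
  (i : 'I_n) (x : state n) (z : int) : Prop :=
  [/\ inO z,
      C_social W i z x <= C_social W i (x i) x
    & `|z - theta| <= `|x i - theta|].

Definition update (n : nat) (x : state n) (i : 'I_n) (z : int) : state n :=
  fun j => if j == i then z else x j.

Fixpoint legal (R : realFieldType) (n : nat) (W : 'M[R]_n)
  (x : state n) (s : seq ('I_n * int)) : Prop :=
  match s with
  | [::] => True
  | (i, z) :: s' => P_i W i x z /\ legal W (update x i z) s'
  end.

Fixpoint final_state (n : nat) (x : state n) (s : seq ('I_n * int)) : state n :=
  match s with
  | [::] => x
  | (i, z) :: s' => final_state (update x i z) s'
  end.

(* Equilibrium: P_i(x) = {x_i} for all i (x_i always belongs to P_i(x)). *)
Definition equilibrium (R : realFieldType) (n : nat) (W : 'M[R]_n)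
  (x : state n) : Prop :=
  forall i z, P_i W i x z <-> z = x i.

Definition consensus_state (n : nat) (x : state n) (z : int) : Prop :=
  forall i, x i = z.

Definition non_consensus (n : nat) (x : state n) : Prop :=
  exists i j, x i != x j.

(* Write w_i(v) for the total weight agent i puts on agents holding opinion v.
   The cost of each z in O for agent i is linear in w_i(1), w_i(0), w_i(-1):
   an agent at 0 can never move, and an agent at 1 (resp. -1) is stuck exactly
   when w_i(1) > 1/2 (resp. w_i(-1) > 1/2).  First, while some agent at -1 has
   w_i(-1) <= 1/2, flip it to 1; this is legal because nobody holds 0.  If no
   -1 is left we have reached consensus at 1.  Otherwise, while some agent at 1
   has w_i(1) <= 1/2, move it to 0; this leaves every w_i(-1) unchanged, so the
   agents at -1 stay stuck and the process ends in an equilibrium that still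
   contains a -1: either the consensus at -1 or a non-consensus equilibrium. *)

From HB Require Import structures.
From mathcomp Require Import all_boot all_order all_algebra.
From mathcomp Require Import lra.
Set Implicit Arguments. Unset Strict Implicit. Unset Printing Implicit Defensive.
Import Order.TTheory GRing.Theory Num.Theory.
Local Open Scope ring_scope.

Lemma inOP z : inO z -> [\/ z = 1, z = 0 | z = -1].
Proof.
by rewrite /inO !inE => /or3P [] /eqP ->; [constructor 3|constructor 2|constructor 1].
Qed.

Lemma in_On_update n (x : state n) i z : in_On x -> inO z -> in_On (update x i z).
Proof. by move=> hx hz j; rewrite /update; case: eqP. Qed.

Section LegalSequences.
Variables (R : realFieldType) (n : nat) (W : 'M[R]_n).

Lemma legal_cat (x : state n) s1 s2 :
  legal W x s1 -> legal W (final_state x s1) s2 -> legal W x (s1 ++ s2).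
Proof. by elim: s1 x => [|[i z] s1 IH] x //= [? ?] ?; split => //; apply: IH. Qed.

Lemma final_state_cat (x : state n) s1 s2 :
  final_state x (s1 ++ s2) = final_state (final_state x s1) s2.
Proof. by elim: s1 x => [|[i z] s1 IH] x //=. Qed.

Variables (Inv : state n -> Prop) (a b : int) (movable : state n -> 'I_n -> bool).
Hypothesis neq_ab : a != b.
Hypothesis move_legal : forall x i, Inv x -> x i = a -> movable x i -> P_i W i x b.
Hypothesis move_inv : forall x i, Inv x -> x i = a -> movable x i -> Inv (update x i b).

(* Each move a -> b lowers the number of agents holding a. *)
Lemma greedy_legal_updates (x : state n) : Inv x ->
  exists s, [/\ legal W x s, Inv (final_state x s) &
    forall i, final_state x s i = a -> ~~ movable (final_state x s) i].
Proof.
have [m] := ubnP #|[set j | x j == a]|; elim: m x => // m IH x hm hx.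
case: (pickP [pred i | (x i == a) && movable x i]) => [i /andP [/eqP xi mi] | stuck].
  have fewer : (#|[set j | update x i b j == a]| < #|[set j | x j == a]|)%N.
    apply: proper_card; apply/properP; split.
      apply/subsetP => j; rewrite !inE /update.
      by case: ifP => // _; rewrite eq_sym (negbTE neq_ab).
    by exists i; rewrite !inE /update ?eqxx ?xi // eq_sym.
  have [s [hl hinv hstuck]] := IH _ (leq_trans fewer hm) (move_inv hx xi mi).
  by exists ((i, b) :: s); split => //; split => //; apply: move_legal.
by exists [::]; split => // i /= xi; move: (stuck i); rewrite /= xi eqxx => /negbT.
Qed.

End LegalSequences.

Section Costs.
Variables (R : realFieldType) (n : nat) (W : 'M[R]_n).
Hypothesis W_stoch : row_stochastic W.

Definition opinion_weight (x : state n) i (v : int) : R :=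
  \sum_j W i j * (x j == v)%:R.

Lemma sum_by_opinion (x : state n) i (g : int -> R) : in_On x ->
  \sum_j W i j * g (x j) =
  g 1 * opinion_weight x i 1 + g 0 * opinion_weight x i 0
  + g (-1) * opinion_weight x i (-1).
Proof.
move=> hx; rewrite /opinion_weight !mulr_sumr -!big_split; apply: eq_bigr => j _ /=.
by case: (inOP (hx j)) => ->; rewrite /=; lra.
Qed.

Lemma opinion_weight_ge0 (x : state n) i v : 0 <= opinion_weight x i v.
Proof. by apply: sumr_ge0 => j _; rewrite mulr_ge0 ?ler0n ?W_stoch.1. Qed.

Lemma opinion_weights_sum1 (x : state n) i : in_On x ->
  opinion_weight x i 1 + opinion_weight x i 0 + opinion_weight x i (-1) = 1.
Proof.
move=> hx; rewrite -(W_stoch.2 i).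
have := sum_by_opinion i (fun=> 1) hx; rewrite !mul1r => <-.
by apply: eq_bigr => j _; rewrite mulr1.
Qed.

Lemma opinion_weight_update (x : state n) i z k v : x i != v -> z != v ->
  opinion_weight (update x i z) k v = opinion_weight x k v.
Proof.
move=> xiv zv; apply: eq_bigr => j _; rewrite /update.
by case: ifP => // /eqP ->; rewrite (negbTE xiv) (negbTE zv).
Qed.

Lemma C_social_by_opinion (x : state n) i z : in_On x ->
  C_social W i z x = `|z - 1|%:~R * opinion_weight x i 1
    + `|z - 0|%:~R * opinion_weight x i 0 + `|z + 1|%:~R * opinion_weight x i (-1).
Proof. by move=> hx; rewrite /C_social (sum_by_opinion i (fun t => `|z - t|%:~R)). Qed.

Lemma C_social1 (x : state n) i : in_On x ->
  C_social W i 1 x = opinion_weight x i 0 + 2 * opinion_weight x i (-1).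
Proof.
by move=> hx; rewrite C_social_by_opinion // -!natr_absz /= ?subnn ?addn0 ?add0n; lra.
Qed.

Lemma C_social0 (x : state n) i : in_On x ->
  C_social W i 0 x = opinion_weight x i 1 + opinion_weight x i (-1).
Proof.
by move=> hx; rewrite C_social_by_opinion // -!natr_absz /= ?subnn ?addn0 ?add0n; lra.
Qed.

Lemma C_socialN1 (x : state n) i : in_On x ->
  C_social W i (-1) x = 2 * opinion_weight x i 1 + opinion_weight x i 0.
Proof.
by move=> hx; rewrite C_social_by_opinion // -!natr_absz /= ?subnn ?addn0 ?add0n; lra.
Qed.

Lemma P_i_refl (x : state n) i : in_On x -> P_i W i x (x i).
Proof. by move=> hx; split. Qed.

Lemma P_i_stuck0 (x : state n) i z : x i = 0 -> P_i W i x z -> z = x i.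
Proof. by move=> xi [_ _]; rewrite xi /theta !subr0 normr0 normr_le0 => /eqP. Qed.

Lemma P_i_stuck_extreme (x : state n) i z : in_On x -> x i != 0 ->
  1 < 2 * opinion_weight x i (x i) -> P_i W i x z -> z = x i.
Proof.
move=> hx xi0 hw [hz hc _].
have w0 := opinion_weight_ge0 x i 0; have wsum := opinion_weights_sum1 i hx.
case: (inOP (hx i)) xi0 hw hc => -> // _ hw hc; case: (inOP hz) hc => -> hc //;
  exfalso; rewrite ?C_social1 ?C_social0 ?C_socialN1 // in hc; lra.
Qed.

Lemma equilibrium_of_stuck (y : state n) : in_On y ->
  (forall i, y i != 0 -> 1 < 2 * opinion_weight y i (y i)) -> equilibrium W y.
Proof.
move=> hy hst i z; split => [|->]; last exact: P_i_refl.
have [/P_i_stuck0|yi0] := eqVneq (y i) 0; first exact.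
exact: P_i_stuck_extreme (hst i yi0).
Qed.

(* With no agent at 0 the choice between 1 and -1 is a majority vote. *)
Lemma P_i_flipN1 (x : state n) i : in_On x -> (forall j, x j != 0) -> x i = -1 ->
  2 * opinion_weight x i (-1) <= 1 -> P_i W i x 1.
Proof.
move=> hx hx0 xi hw; split; rewrite ?xi //.
have w0 : opinion_weight x i 0 = 0.
  by rewrite /opinion_weight big1 // => j _; rewrite (negbTE (hx0 j)) mulr0.
rewrite C_social1 // C_socialN1 //.
have := opinion_weights_sum1 i hx; lra.
Qed.

Lemma P_i_drop1 (x : state n) i : in_On x -> x i = 1 ->
  2 * opinion_weight x i 1 <= 1 -> P_i W i x 0.
Proof.
move=> hx xi hw; split; rewrite ?xi //.
rewrite C_social0 // C_social1 //.
have := opinion_weights_sum1 i hx; have := opinion_weight_ge0 x i 0; lra.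
Qed.

Lemma flip_unstableN1 (x : state n) : in_On x -> (forall j, x j != 0) ->
  exists s, [/\ legal W x s, in_On (final_state x s),
    forall j, final_state x s j != 0 &
    forall i, final_state x s i = -1 -> 1 < 2 * opinion_weight (final_state x s) i (-1)].
Proof.
move=> hx hx0.
pose Inv (y : state n) := in_On y /\ forall j, y j != 0.
pose unstable y i := 2 * opinion_weight y i (-1) <= 1.
have flip_legal y i : Inv y -> y i = -1 -> unstable y i -> P_i W i y 1.
  by move=> [hy hy0]; apply: P_i_flipN1.
have flip_inv y i : Inv y -> y i = -1 -> unstable y i -> Inv (update y i 1).
  move=> [hy hy0] _ _; split; first exact: in_On_update.
  by move=> j; rewrite /update; case: ifP.
have [s [hl [hy hy0] hst]] :=
  greedy_legal_updates (a := -1) (b := 1) isT flip_legal flip_inv (conj hx hx0).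
by exists s; split => // i /hst; rewrite ltNge.
Qed.

Lemma drop_unstable1 (x : state n) j : in_On x -> x j = -1 ->
  (forall i, x i = -1 -> 1 < 2 * opinion_weight x i (-1)) ->
  exists s, [/\ legal W x s, equilibrium W (final_state x s) & final_state x s j = -1].
Proof.
move=> hx xj hst.
pose Inv (y : state n) :=
  [/\ in_On y, y j = -1 & forall i, y i = -1 -> 1 < 2 * opinion_weight y i (-1)].
pose unstable y i := 2 * opinion_weight y i 1 <= 1.
have drop_legal y i : Inv y -> y i = 1 -> unstable y i -> P_i W i y 0.
  by move=> [hy _ _]; apply: P_i_drop1.
have drop_inv y i : Inv y -> y i = 1 -> unstable y i -> Inv (update y i 0).
  move=> [hy yj hyst] yi _; have ij : (j == i) = false.
    by apply/negbTE; apply: contra_eq_neq yi => <-; rewrite yj.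
  split; first exact: in_On_update.
    by rewrite /update ij.
  move=> k; rewrite opinion_weight_update ?yi //.
  by rewrite /update; case: ifP => // _; apply: hyst.
have [s [hl [hy yj hyst] hst1]] :=
  greedy_legal_updates (a := 1) (b := 0) isT drop_legal drop_inv (And3 hx xj hst).
exists s; split => //; apply: equilibrium_of_stuck => // i.
case: (inOP (hy i)) => yi; rewrite yi // => _; last exact: hyst.
by rewrite ltNge; apply: hst1.
Qed.

End Costs.

Theorem lemma5 (R : realFieldType) (n : nat) (W : 'M[R]_n) (x0 : state n) :
  (0 < n)%N ->
  row_stochastic W ->
  in_On x0 ->
  (forall i, x0 i != 0) ->
  exists s : seq ('I_n * int),
    legal W x0 s /\
    ((exists z : int, z != 0 /\ consensus_state (final_state x0 s) z) \/
     (equilibrium W (final_state x0 s) /\ non_consensus (final_state x0 s))).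
Proof.
move=> _ hW hx hx0.
have [s1 [hl1 hy hy0 hyst]] := flip_unstableN1 hW hx hx0.
set y := final_state x0 s1 in hy hy0 hyst.
case: (pickP [pred j | y j == -1]) => [j /eqP yj | noN1].
  have [s2 [hl2 heq hj]] := drop_unstable1 hW hy yj hyst.
  exists (s1 ++ s2); split; first exact: legal_cat.
  rewrite final_state_cat -/y.
  case: (pickP [pred k | final_state y s2 k != -1]) => [k hk | allN1].
    by right; split => //; exists k, j; rewrite hj.
  by left; exists (-1); split => // k; apply/eqP/negbFE/allN1.
exists s1; split => //; left; exists 1; split => // k.
by case: (inOP (hy k)) (hy0 k) (noN1 k) => yk; rewrite /= yk ?eqxx.
Qed.
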